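(* The set $\widehat{M}_V$ of pricing measures with finite loss-entropy is convex.
   Context: Let $(\Omega,\mathcal{F},\mathbb{P})$ be a probability space and $K\subseteq L^0(\mathbb{P})$ a convex cone (of terminal wealths). Let $a\in[-\infty,\infty)$ and $U:(a,\infty)\to\mathbb{R}$ be increasing, strictly concave, continuously differentiable with $\lim_{x\downarrow a}U'(x)=\infty$ and $\lim_{x\uparrow\infty}U'(x)=0$; if $a=-\infty$, assume moreover $\liminf_{x\to-\infty}\frac{xU'(x)}{U(x)}>1$. Let $V(y)=\sup_{x\in(a,\infty)}\{U(x)-xy\}$ for $y>0$ and $V^+=\max\{V,0\}$. Define $M_1=\{\mathbb{Q}\ll\mathbb{P}: X\in L^1(\mathbb{Q})\text{ and }\mathbb{E}_{\mathbb{Q}}[X]\le 0\text{ for all }X\in K\}$. A measure $\mathbb{Q}\ll\mathbb{P}$ has finite loss-entropy if there is a constant $b>0$ with $\mathbb{E}_{\mathbb{P}}\big[V^+\big(\tfrac{d\mathbb{Q}}{d\mathbb{P}}\big)\mathbf{1}_{\{d\mathbb{Q}/d\mathbb{P}\ge b\}}\big]<\infty$. Set $\widehat{M}_V=\{\mathbb{Q}\in M_1:\mathbb{Q}\text{ has finite loss-entropy}\}$. *)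

From mathcomp Require Import all_boot all_order all_algebra.
From mathcomp Require Import all_classical all_reals all_analysis.
Set Implicit Arguments. Unset Strict Implicit. Unset Printing Implicit Defensive.
Import Order.TTheory GRing.Theory Num.Theory.
Import numFieldNormedType.Exports.
Local Open Scope classical_set_scope.
Local Open Scope ring_scope.

Definition dom_a (R : realType) (a : \bar R) : set R := [set x | (a < x%:E)%E].

Definition to_a (R : realType) (a : \bar R) : set_system R :=
  match a with
  | EFin r => r^'+
  | _ => ninfty_nbhs R
  end.

Definition utility (R : realType) (a : \bar R) (U : R -> R) : Prop :=
  (a < +oo)%E /\
  [/\
      (forall x y, dom_a a x -> dom_a a y -> x < y -> U x < U y),
      (forall x y t, dom_a a x -> dom_a a y -> x != y -> 0 < t -> t < 1 ->
         t * U x + (1 - t) * U y < U (t * x + (1 - t) * y)),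
      (forall x, dom_a a x -> derivable U x 1) /\
        (forall x, dom_a a x -> (derive1 U y @[y --> x] --> derive1 U x)),
      ((derive1 U x)%:E @[x --> to_a a] --> +oo%E) /\
        (derive1 U x @[x --> +oo] --> (0:R))
    & (* asymptotic elasticity condition when a = -oo:
         liminf_{x -> -oo} x U'(x) / U(x) > 1 *)
      (a = -oo%E ->
        exists2 c : R, 1 < c &
          \forall x \near ninfty_nbhs R, c <= x * derive1 U x / U x)].

Definition conjV (R : realType) (a : \bar R) (U : R -> R) (y : R) : \bar R :=
  ereal_sup [set ((U x - x * y)%:E) | x in dom_a a].

Definition conjVplus (R : realType) (a : \bar R) (U : R -> R) (y : R) : \bar R :=
  Order.max (conjV a U y) 0%E.

Definition convex_cone_L0 d (T : measurableType d) (R : realType)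
  (K : set (T -> R)) : Prop :=
  [/\ (forall X, K X -> measurable_fun setT X),
      (forall X lam, K X -> 0 <= lam -> K (fun w => lam * X w))
    & (forall X Y t, K X -> K Y -> 0 <= t -> t <= 1 ->
         K (fun w => t * X w + (1 - t) * Y w))].

Definition M1 d (T : measurableType d) (R : realType)
  (P : probability T R) (K : set (T -> R)) (Q : probability T R) : Prop :=
  Q `<< P /\
  forall X, K X ->
    Q.-integrable setT (fun w => (X w)%:E) /\
    (\int[Q]_w (X w)%:E <= 0)%E.

Definition is_density d (T : measurableType d) (R : realType)
  (P Q : probability T R) (Z : T -> R) : Prop :=
  [/\ measurable_fun setT Z, (forall w, 0 <= Z w)
    & forall A, measurable A -> Q A = (\int[P]_(w in A) (Z w)%:E)%E].

Definition finite_loss_entropy d (T : measurableType d) (R : realType)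
  (a : \bar R) (U : R -> R) (P Q : probability T R) : Prop :=
  exists Z, is_density P Q Z /\
    exists2 b : R, 0 < b &
      (\int[P]_(w in [set w | (b <= Z w)%R]) conjVplus a U (Z w) < +oo)%E.

Definition MhatV d (T : measurableType d) (R : realType)
  (a : \bar R) (U : R -> R) (P : probability T R) (K : set (T -> R))
  (Q : probability T R) : Prop :=
  M1 P K Q /\ finite_loss_entropy a U P Q.

From mathcomp Require Import all_boot all_order all_algebra.
From mathcomp Require Import all_classical all_reals all_analysis.
From mathcomp Require Import measurable_realfun.
From mathcomp Require Import ring lra.
Set Implicit Arguments. Unset Strict Implicit. Unset Printing Implicit Defensive.
Import Order.TTheory GRing.Theory Num.Theory.
Import numFieldNormedType.Exports.
Local Open Scope classical_set_scope.
Local Open Scope ring_scope.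

(* The mixture Q = t Q1 + (1 - t) Q2 has density t Z1 + (1 - t) Z2, and
   integrals against Q are the corresponding mixtures of integrals against Q1
   and Q2, so Q inherits absolute continuity and the pricing inequalities
   E_Q[X] <= 0.  For the loss-entropy: V is a supremum of affine functions,
   hence quasi-convex, V y <= max (V c) (V m) for c <= y <= m.  Choosing
   c >= max b1 b2 with V^+ c finite (if there is none, V^+ is +oo beyond
   max b1 b2 and every bound below is trivial) gives V^+ y <= V^+ c + V^+ m
   for c <= y <= m.  Since t Z1 + (1 - t) Z2 <= max Z1 Z2, on {Z >= c} the
   integrand V^+(Z) is dominated by
   V^+ c + V^+(Z1) 1_{Z1 >= b1} + V^+(Z2) 1_{Z2 >= b2}, which has finite
   integral. *)

Section conjugate.
Context (R : realType) (a : \bar R) (U : R -> R).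
Local Notation V := (conjV a U).
Local Notation Vp := (conjVplus a U).

Lemma conjV_le_max c y m : c <= y -> y <= m ->
  (V y <= Order.max (V c) (V m))%E.
Proof.
move=> cy ym; apply: ge_ereal_sup => _ [x dx <-]; rewrite le_max.
have [x0|x0] := leP 0 x; apply/orP; [left|right];
  apply: le_trans (ereal_sup_ubound _); try by exists x.
- by rewrite lee_fin lerD2l lerN2 ler_wpM2l.
- by rewrite lee_fin lerD2l lerN2 ler_wnM2l // ltW.
Qed.

Lemma conjV_lsc : lower_semicontinuous V.
Proof.
move=> y r /ereal_sup_gt [_ [x dx <-]]; rewrite lte_fin => rlt.
exists [set y' | r < U x - x * y'].
  have cv : (fun y' => U x - x * y') @ y --> U x - x * y.
    by apply: cvgB; [exact: cvg_cst | apply: cvgMr; exact: cvg_id].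
  exact: cvgr_gt _ cv _ rlt.
move=> y' /= ry'; apply: lt_le_trans (ereal_sup_ubound _); last by exists x.
by rewrite lte_fin.
Qed.

Lemma measurable_conjVplus : measurable_fun [set: R] (fun y : R => Vp y).
Proof.
apply: measurable_maxe => //.
exact: lower_semicontinuous_measurable conjV_lsc.
Qed.

Lemma conjVplus_ge0 y : (0 <= Vp y)%E.
Proof. by rewrite /conjVplus le_max lexx orbT. Qed.

Lemma conjVplus_tail_le b0 : exists C b, [/\ (0 <= C)%E, (C < +oo)%E, b0 <= b &
  forall y m, b <= y -> y <= m -> (Vp y <= C + Vp m)%E].
Proof.
have [[c [b0c Vc]]|Vinf] := pselect (exists c, b0 <= c /\ (Vp c < +oo)%E).
  exists (Vp c), c; split=> // [|y m cy ym]; first exact: conjVplus_ge0.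
  rewrite /conjVplus ge_max adde_ge0 ?conjVplus_ge0 // andbT.
  apply: le_trans (conjV_le_max cy ym) _; rewrite ge_max; apply/andP; split.
  - by apply: le_trans (leeDl _ (conjVplus_ge0 m)); rewrite le_max lexx.
  - by apply: le_trans (leeDr _ (conjVplus_ge0 c)); rewrite le_max lexx.
exists 0%E, b0; split=> // y m b0y ym.
suff -> : Vp m = +oo%E by rewrite leey.
apply/eqP; rewrite eq_le leey /= leNgt; apply/negP => Vm.
by apply: Vinf; exists m; split => //; exact: le_trans ym.
Qed.

Lemma conjVplus_mixture_le C b b1 b2 t z1 z2 :
  (forall y m, b <= y -> y <= m -> (Vp y <= C + Vp m)%E) ->
  b1 <= b -> b2 <= b -> 0 <= t <= 1 -> b <= t * z1 + (1 - t) * z2 ->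
  (Vp (t * z1 + (1 - t) * z2) <=
     C + ((Vp \_ [set y | (b1 <= y)%R]) z1 + (Vp \_ [set y | (b2 <= y)%R]) z2))%E.
Proof.
move=> Vtail b1b b2b /andP[t0 t1] bz.
have tail_ge0 (c z : R) : (0 <= (Vp \_ [set y | (c <= y)%R]) z)%E.
  by apply: erestrict_ge0 => y _; exact: conjVplus_ge0.
have [z12|z21] := leP z1 z2.
- have zle : t * z1 + (1 - t) * z2 <= z2 by nra.
  apply: le_trans (Vtail _ _ bz zle) (leeD (lexx _) _).
  rewrite [X in (_ <= _ + X)%E]patchT ?inE /=; first exact: leeDr.
  exact: le_trans b2b (le_trans bz zle).
- have zle : t * z1 + (1 - t) * z2 <= z1 by nra.
  apply: le_trans (Vtail _ _ bz zle) (leeD (lexx _) _).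
  rewrite [X in (_ <= X + _)%E]patchT ?inE /=; first exact: leeDl.
  exact: le_trans b1b (le_trans bz zle).
Qed.

End conjugate.

Lemma lincombeB (R : numDomainType) (s t : R) (p1 n1 p2 n2 : \bar R) :
  p1 \is a fin_num -> n1 \is a fin_num -> p2 \is a fin_num -> n2 \is a fin_num ->
  (s%:E * p1 + t%:E * p2 - (s%:E * n1 + t%:E * n2) =
   s%:E * (p1 - n1) + t%:E * (p2 - n2))%E.
Proof.
case: p1 n1 p2 n2 => [p1||] // [n1||] // [p2||] // [n2||] // _ _ _ _.
by rewrite /=; congr EFin; ring.
Qed.

Section mixture.
Context d (T : measurableType d) (R : realType).
Variables (mu1 mu2 mu : {measure set T -> \bar R}) (t : R).
Hypotheses (t_ge0 : 0 <= t) (t_le1 : t <= 1).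
Hypothesis muE :
  forall A, measurable A -> mu A = (t%:E * mu1 A + (1 - t)%:E * mu2 A)%E.
Local Open Scope ereal_scope.

Lemma mixture_abs_cont (nu : {measure set T -> \bar R}) :
  mu1 `<< nu -> mu2 `<< nu -> mu `<< nu.
Proof.
move=> /null_content_dominatesP mu1nu /null_content_dominatesP mu2nu.
apply/null_content_dominatesP => A mA nuA0.
by rewrite muE // mu1nu // mu2nu // !mule0 adde0.
Qed.

Lemma ge0_integral_mixture (f : T -> \bar R) :
  measurable_fun setT f -> (forall x, 0 <= f x) ->
  \int[mu]_x f x = t%:E * \int[mu1]_x f x + (1 - t)%:E * \int[mu2]_x f x.
Proof.
move=> mf f0; have s_ge0 : (0 <= 1 - t)%R by rewrite subr_ge0.
rewrite (eq_measure_integral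
  (measure_add (mscale (NngNum t_ge0) mu1) (mscale (NngNum s_ge0) mu2))); last first.
  by move=> A mA _; rewrite muE // /measure_add/= /msum 2!big_ord_recl/= big_ord0 adde0.
by rewrite ge0_integral_measure_add // !ge0_integral_mscale.
Qed.

Lemma integrable_mixture (f : T -> \bar R) :
  mu1.-integrable setT f -> mu2.-integrable setT f -> mu.-integrable setT f.
Proof.
move=> /integrableP[mf f1] /integrableP[_ f2]; apply/integrableP; split => //.
rewrite ge0_integral_mixture //; last exact: measurableT_comp.
by apply: lte_add_pinfty; apply: lte_mul_pinfty; rewrite ?lee_fin ?subr_ge0.
Qed.

Lemma integral_mixture (f : T -> \bar R) :
  mu1.-integrable setT f -> mu2.-integrable setT f ->
  \int[mu]_x f x = t%:E * \int[mu1]_x f x + (1 - t)%:E * \int[mu2]_x f x.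
Proof.
move=> i1 i2; have mf := measurable_int _ i1.
rewrite !(integralE _ _ f) !ge0_integral_mixture //;
  [|exact: measurable_funeneg|exact: measurable_funepos].
by apply: lincombeB; [exact: integrable_pos_fin_num i1|exact: integrable_neg_fin_num i1
  |exact: integrable_pos_fin_num i2|exact: integrable_neg_fin_num i2].
Qed.

End mixture.

Lemma measurable_superlevel d (T : measurableType d) (R : realType)
    (f : T -> R) (c : R) :
  measurable_fun setT f -> measurable [set x | c <= f x].
Proof. by move=> mf; rewrite -preimage_itvcy -[X in measurable X]setTI; exact: mf. Qed.

Lemma measurable_tail (R : realType) (phi : R -> \bar R) (c : R) :
  measurable_fun setT (fun y : R => phi y) ->
  measurable_fun setT (fun y : R => (phi \_ [set y | (c <= y)%R]) y).
Proof.
have mc : measurable [set y : R | c <= y] by rewrite -set_itvcy.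
by move=> mphi; apply/(measurable_restrictT _ mc)/measurable_funTS.
Qed.

Lemma ge0_integral_tail_le d (T : measurableType d) (R : realType)
    (mu : {measure set T -> \bar R}) (phi : R -> \bar R) (Z : T -> R)
    (S : set T) (b : R) :
  measurable S -> measurable_fun setT (fun y : R => phi y) ->
  measurable_fun setT Z -> (forall y, (0 <= phi y)%E) ->
  (\int[mu]_(w in S) (phi \_ [set y | (b <= y)%R]) (Z w) <=
   \int[mu]_(w in [set w | (b <= Z w)%R]) phi (Z w))%E.
Proof.
move=> mS mphi mZ phi0.
have mB := measurable_superlevel b mZ.
have -> : (fun w => (phi \_ [set y | (b <= y)%R]) (Z w)) =
          (phi \o Z) \_ [set w | (b <= Z w)%R].
  apply/funext => w; rewrite /patch /=.
  have [bZ|/negP bZ] := boolP (b <= Z w); first by rewrite !mem_set.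
  by rewrite !memNset.
rewrite -integral_mkcondr; apply: ge0_subset_integral => //.
- exact: measurableI.
- exact/measurable_funTS/measurableT_comp.
- by move=> w _; exact: phi0.
Qed.

Section pricing_measure_mixture.
Context d (T : measurableType d) (R : realType) (P Q1 Q2 Q : probability T R).
Variable t : R.
Hypotheses (t_ge0 : 0 <= t) (t_le1 : t <= 1).
Hypothesis QE :
  forall A, measurable A -> Q A = (t%:E * Q1 A + (1 - t)%:E * Q2 A)%E.

Lemma is_density_mixture Z1 Z2 : is_density P Q1 Z1 -> is_density P Q2 Z2 ->
  is_density P Q (fun w => t * Z1 w + (1 - t) * Z2 w).
Proof.
move=> [mZ1 Z1_ge0 Q1E] [mZ2 Z2_ge0 Q2E]; have s_ge0 : 0 <= 1 - t by rewrite subr_ge0.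
split=> [||A mA].
- by apply: measurable_funD; apply: measurable_funM.
- by move=> w; rewrite addr_ge0 // mulr_ge0.
have mZ (Z : T -> R) : measurable_fun setT Z -> measurable_fun A (EFin \o Z).
  by move=> mZ; exact/measurable_EFinP/measurable_funTS.
under eq_integral do rewrite EFinD !EFinM.
rewrite QE // Q1E // Q2E // ge0_integralD //; last 4 first.
- by move=> w _; rewrite mule_ge0 // lee_fin.
- exact/emeasurable_funM/mZ.
- by move=> w _; rewrite mule_ge0 // lee_fin.
- exact/emeasurable_funM/mZ.
rewrite !ge0_integralZl_EFin //; by [move=> w _; rewrite lee_fin | exact: mZ].
Qed.

Lemma M1_mixture K : M1 P K Q1 -> M1 P K Q2 -> M1 P K Q.
Proof.
move=> [Q1P K1] [Q2P K2]; split; first exact (mixture_abs_cont QE Q1P Q2P).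
move=> X KX; have [iX1 EX1] := K1 X KX; have [iX2 EX2] := K2 X KX.
split; first exact (integrable_mixture t_ge0 t_le1 QE iX1 iX2).
rewrite (integral_mixture t_ge0 t_le1 QE iX1 iX2).
by apply: adde_le0; apply: mule_ge0_le0; rewrite // lee_fin subr_ge0.
Qed.

Lemma finite_loss_entropy_mixture (a : \bar R) (U : R -> R) :
  finite_loss_entropy a U P Q1 -> finite_loss_entropy a U P Q2 ->
  finite_loss_entropy a U P Q.
Proof.
move=> [Z1 [dZ1 [b1 b1_gt0 I1]]] [Z2 [dZ2 [b2 b2_gt0 I2]]].
have dZ := is_density_mixture dZ1 dZ2.
exists (fun w => t * Z1 w + (1 - t) * Z2 w); split => //.
case: dZ1 dZ2 dZ => mZ1 _ _ [mZ2 _ _] [mZ _ _].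
have [C [b [C_ge0 C_fin b12b Vtail]]] := conjVplus_tail_le a U (Num.max b1 b2).
have [b1b b2b] : b1 <= b /\ b2 <= b by apply/andP; rewrite -ge_max.
exists b; first exact: lt_le_trans b1_gt0 b1b.
set S := [set w | _]; have mS : measurable S := measurable_superlevel b mZ.
pose tail c (f : T -> R) w := (conjVplus a U \_ [set y | c <= y]) (f w).
have tail_ge0 (c : R) (f : T -> R) w : (0 <= tail c f w)%E.
  by apply: erestrict_ge0 => y _; exact: conjVplus_ge0.
have mtail (c : R) (f : T -> R) : measurable_fun setT f -> measurable_fun S (tail c f).
  move=> mf; apply: measurable_funTS.
  exact: measurableT_comp (measurable_tail c (measurable_conjVplus a U)) mf.
have tail_lty (c : R) (f : T -> R) : measurable_fun setT f ->
    (\int[P]_(w in [set w | (c <= f w)%R]) conjVplus a U (f w) < +oo)%E ->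
    (\int[P]_(w in S) tail c f w < +oo)%E.
  move=> mf; apply: le_lt_trans.
  exact: ge0_integral_tail_le (measurable_conjVplus a U) mf (conjVplus_ge0 a U).
apply: (@le_lt_trans _ _ (\int[P]_(w in S) (C + (tail b1 Z1 w + tail b2 Z2 w)))%E).
  apply: ge0_le_integral => //.
  - by move=> w _; exact: conjVplus_ge0.
  - exact/measurable_funTS/(measurableT_comp (measurable_conjVplus a U)).
  - by apply: emeasurable_funD => //; apply: emeasurable_funD; exact: mtail.
  - by move=> w; apply: conjVplus_mixture_le; rewrite ?t_ge0.
rewrite ge0_integralD //; last 2 first.
- by move=> w _; rewrite adde_ge0.
- by apply: emeasurable_funD; exact: mtail.
rewrite ge0_integralD //; try exact: mtail.
rewrite integral_cst //; apply: lte_add_pinfty; last first.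
  by apply: lte_add_pinfty; exact: tail_lty.
by rewrite muleC lte_mul_pinfty ?fin_num_measure.
Qed.

End pricing_measure_mixture.

Theorem lemma3p3 (d : measure_display) (T : measurableType d) (R : realType)
  (P : probability T R) (K : set (T -> R)) (a : \bar R) (U : R -> R) :
  convex_cone_L0 K -> utility a U ->
  forall (Q1 Q2 Q : probability T R) (t : R),
    MhatV a U P K Q1 -> MhatV a U P K Q2 -> 0 <= t -> t <= 1 ->
    (forall A, measurable A -> Q A = (t%:E * Q1 A + (1 - t)%:E * Q2 A)%E) ->
    MhatV a U P K Q.
Proof.
move=> _ _ Q1 Q2 Q t [M1Q1 LQ1] [M1Q2 LQ2] t_ge0 t_le1 QE; split.
- exact (M1_mixture t_ge0 t_le1 QE M1Q1 M1Q2).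
- exact (finite_loss_entropy_mixture t_ge0 t_le1 QE LQ1 LQ2).
Qed.
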